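(* Let $F\colon \mathbb{R}^n \to \mathbb{R}$ be a differentiable function (a deep neural network) that is strictly positive homogeneous of degree $k \in \mathbb{R}$ with $k \geq 1$, i.e. $F(\alpha x) = \alpha^k F(x)$ for all $x \in \mathbb{R}^n$ and all $\alpha \in \mathbb{R}_{>0}$. Then for every $x\in\mathbb{R}^n$ and every $i\in\{1,\dots,n\}$, the Integrated Gradients attribution $\mathrm{IG}_i(F, x, \mathbf{0})$ with respect to the zero baseline $\mathbf{0}\in\mathbb{R}^n$ admits a closed-form expression requiring only one forward/backward pass, i.e. an explicit expression in terms of $x$ and the single gradient $\nabla F(x)$.
   Context: For a differentiable $F\colon\mathbb{R}^n\to\mathbb{R}$, input $x\in\mathbb{R}^n$ and the zero baseline, Integrated Gradients along the $i$-th dimension (using the straight-line path $\gamma(\alpha)=\alpha x$) is defined as $\mathrm{IG}_i(F,x,\mathbf{0}) = \int_0^1 \frac{\partial F(\gamma(\alpha))}{\partial \gamma_i(\alpha)}\,\frac{\partial \gamma_i(\alpha)}{\partial \alpha}\,d\alpha = \int_0^1 \frac{\partial F}{\partial x_i}(\alpha x)\, x_i\, d\alpha$. ''Requiring only one forward/backward pass'' means the quantity can be computed from a single evaluation of $F$ and its gradient $\nabla F$ at the point $x$ (no numerical integration over multiple points). *)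

From HB Require Import structures.
From mathcomp Require Import all_boot all_order all_algebra.
From mathcomp Require Import all_classical all_reals all_analysis.
Set Implicit Arguments. Unset Strict Implicit. Unset Printing Implicit Defensive.
Import Order.TTheory GRing.Theory Num.Theory.
Import numFieldNormedType.Exports.
Local Open Scope classical_set_scope.
Local Open Scope ring_scope.

(* Vectors of R^n are row vectors 'rV[R]_n; coordinate i is x ord0 i. *)

Definition partial {R : realType} {n : nat} (F : 'rV[R]_n -> R) (i : 'I_n)
  (y : 'rV[R]_n) : R := 'D_(delta_mx ord0 i) F y.

(* Integrand of Integrated Gradients along the straight path alpha |-> alpha x
   from the zero baseline: dF/dx_i (alpha x) * x_i. *)
Definition IG_integrand {R : realType} {n : nat} (F : 'rV[R]_n -> R)
  (x : 'rV[R]_n) (i : 'I_n) (a : R) : R := partial F i (a *: x) * x ord0 i.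

Definition IG0 {R : realType} {n : nat} (F : 'rV[R]_n -> R)
  (x : 'rV[R]_n) (i : 'I_n) : R :=
  Rintegral (@lebesgue_measure R) `[0%R, 1%R] (IG_integrand F x i).

From HB Require Import structures.
From mathcomp Require Import all_boot all_order all_algebra.
From mathcomp Require Import all_classical all_reals all_analysis.
From mathcomp Require Import measurable_realfun.
Import Order.TTheory GRing.Theory Num.Theory.
Import numFieldNormedType.Exports.
Local Open Scope classical_set_scope.
Local Open Scope ring_scope.

(* Differentiating F (a x) = a^k F x shows that the partial derivatives of F
   are positively homogeneous of degree k - 1, so on ]0, 1] the integrand of
   IG_i is x_i (d_i F)(x) a^(k-1).  For k >= 1 this is continuous on [0, 1]
   and integrates to x_i (d_i F)(x) / k; the value of the integrand at a = 0
   does not matter since {0} is Lebesgue-null. *)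

Section homogeneous_derive.
Context {R : realType} {V : normedModType R}.
Variables (F : V -> R) (k : R).
Hypothesis homF : forall (y : V) (a : R), 0 < a -> F (a *: y) = a `^ k * F y.

Lemma derive_homogeneous (x v : V) (a : R) : 0 < a ->
  differentiable F x -> differentiable F (a *: x) ->
  'D_v F (a *: x) = a `^ (k - 1) * 'D_v F x.
Proof.
move=> a0 dFx dFax.
have DscaledE : 'D_(a *: v) F (a *: x) = a `^ k * 'D_v F x.
  rewrite -[RHS]/(a `^ k *: 'D_v F x) -deriveZ; last exact: diff_derivable.
  have quotE (h : R) : F (h *: (a *: v) + a *: x) - F (a *: x)
      = a `^ k * F (h *: v + x) - a `^ k * F x.
    by rewrite scalerA mulrC -scalerA -scalerDr !homF.
  by rewrite /derive; under eq_fun do rewrite /= quotE.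
have DlinearE : 'D_(a *: v) F (a *: x) = a * 'D_v F (a *: x).
  by rewrite !deriveE // linearZ.
apply: (@mulfI _ a); first by rewrite gt_eqF.
rewrite -DlinearE DscaledE mulrA powRB; last by rewrite (gt_eqF a0) implybT.
by rewrite powRr1 ?ltW // mulrCA divff ?(gt_eqF a0) // mulr1.
Qed.

End homogeneous_derive.

Section powR_unit_interval.
Context {R : realType}.
Notation mu := (@lebesgue_measure R).

Lemma derivable_oo_LRcontinuous_powRMr (p c : R) : 0 <= p ->
  derivable_oo_LRcontinuous (fun a => a `^ p * c) 0 1.
Proof.
move=> p0; split.
- move=> a; rewrite in_itv /= => /andP[a0 _].
  by apply: derivableM => //; apply: derivable_powR; rewrite in_itv /= a0.
- apply: cvgM; last exact: cvg_cst.
  move: p0; rewrite le_eqVlt => /predU1P[<-|p0].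
    by rewrite powRr0; apply: cvg_near_cst; near=> a; rewrite powRr0.
  by rewrite powR0 ?gt_eqF //; exact: powR_cvg0.
- apply: cvg_at_left_filter; apply: cvgM; last exact: cvg_cst.
  have /differentiable_continuous : differentiable (fun a : R => a `^ p) (1 : R).
    by apply/derivable1_diffP/derivable_powR; rewrite in_itv /= ltr01.
  exact.
Unshelve. all: by end_near. Qed.

Lemma continuous_powR01 (p : R) : 0 <= p ->
  {within `[0, 1], continuous (fun a : R => a `^ p)}.
Proof.
move=> p0; apply: derivable_oo_LRcontinuous_within.
by under eq_fun do rewrite -[_ `^ p]mulr1; exact: derivable_oo_LRcontinuous_powRMr.
Qed.

Lemma integrable_powR01 (p : R) : 0 <= p ->
  mu.-integrable `[0, 1] (fun a : R => (a `^ p)%:E).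
Proof.
move=> p0; apply: continuous_compact_integrable; first exact: segment_compact.
exact: continuous_powR01.
Qed.

Lemma Rintegral_powR01 (p : R) : 0 <= p ->
  \int[mu]_(a in `[0, 1]) a `^ p = (p + 1)^-1.
Proof.
move=> p0; have p1 : 0 < p + 1 by rewrite ltr_wpDl.
rewrite /Rintegral (@continuous_FTC2 _ _ (fun a => a `^ (p + 1) * (p + 1)^-1)) //=.
- by rewrite powR1 powR0 ?gt_eqF // mul0r mul1r subr0.
- exact: continuous_powR01.
- exact/derivable_oo_LRcontinuous_powRMr/ltW.
- move=> a; rewrite in_itv /= => /andP[a0 _].
  rewrite derive1Mr; last by apply: derivable_powR; rewrite in_itv /= a0.
  by rewrite powR_derive1 ?in_itv /= ?a0 // addrK mulrAC divff ?gt_eqF // mul1r.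
Qed.

End powR_unit_interval.

Section lebesgue_eq_setD1.
(* D lives in the carrier of lebesgue_measure, so that measurable D refers to
   the sigma-algebra the integrals are taken over. *)
Context {R : realType} {D : set (measurableTypeR R)} {r : R} {f g : R -> R}.
Notation mu := (@lebesgue_measure R).
Hypotheses (mD : measurable D) (fg : {in D `\ r, f =1 g}).
Hypothesis intg : mu.-integrable D (EFin \o g).

Let mDr : measurable (D `\ r). Proof. exact: measurableD. Qed.

Let intf_setD1 : mu.-integrable (D `\ r) (EFin \o f).
Proof.
apply: (eq_integrable mDr (EFin \o g)); last exact: integrableS intg.
by move=> a Da; rewrite /= fg.
Qed.

Lemma integrable_eq_setD1 : mu.-integrable D (EFin \o f).
Proof.
have mf : measurable_fun D (EFin \o f).
  have mfDr := measurable_int _ intf_setD1.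
  have [Dr|NDr] := pselect (D r); last by rewrite -(not_setD1 NDr).
  rewrite -(setD1K Dr) measurable_funU //; split => //.
  exact: measurable_fun_set1.
exact/(negligible_integrable _ mD mf (lebesgue_measure_set1 r)).
Qed.

Lemma Rintegral_eq_setD1 :
  \int[mu]_(a in D) f a = \int[mu]_(a in D) g a.
Proof.
have mgDr : measurable_fun (D `\ r) (EFin \o g).
  exact: measurable_funS mD _ (measurable_int _ intg).
rewrite /Rintegral -(integral_setD1 mDr mgDr).
rewrite -(integral_setD1 mDr (measurable_int _ intf_setD1)).
by congr fine; apply: eq_integral => a Da; rewrite /= fg.
Qed.

End lebesgue_eq_setD1.

Theorem proposition3p2 (R : realType) (n : nat) (F : 'rV[R]_n -> R) (k : R)
  (hdiff : forall x : 'rV[R]_n, differentiable F x)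
  (hk : 1 <= k)
  (hhom : forall (x : 'rV[R]_n) (a : R), 0 < a -> F (a *: x) = a `^ k * F x) :
  forall (x : 'rV[R]_n) (i : 'I_n),
    (@lebesgue_measure R).-integrable `[0%R, 1%R] (fun a => (IG_integrand F x i a)%:E) /\
    IG0 F x i = x ord0 i * partial F i x / k.
Proof.
move=> x i; set c := x ord0 i * partial F i x.
have k1 : 0 <= k - 1 by rewrite subr_ge0.
have IG_powR : {in `[0, 1] `\ 0, IG_integrand F x i =1 fun a => c * a `^ (k - 1)}.
  move=> a; rewrite inE /= in_itv /= => -[/andP[a0 _] /eqP an0].
  have a_gt0 : 0 < a by rewrite lt_neqAle eq_sym an0.
  rewrite /IG_integrand /partial (derive_homogeneous _ _ hhom) //.
  by rewrite /c mulrC mulrCA mulrC.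
have int_powR : lebesgue_measure.-integrable `[0, 1]
    (EFin \o fun a => c * a `^ (k - 1)).
  by apply: (integrableZl _ c (integrable_powR01 _ k1)); exact: measurable_itv.
split; first exact: integrable_eq_setD1 (measurable_itv _) IG_powR int_powR.
rewrite /IG0 (Rintegral_eq_setD1 (measurable_itv _) IG_powR int_powR) RintegralZl //.
  by rewrite Rintegral_powR01 // subrK.
exact: integrable_powR01.
Qed.
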